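(* Let $G$ be a layered graph over $\Sigma_{in}$ of depth $n$ and $\mathsf{C}$ a $(G,\Sigma_{out})$-code. For any $w\in\Sigma_{out}^n$, any $\epsilon>0$, and any $PT\in\mathcal{PT}(\mathsf{C},w,\epsilon)$, we have $agr(\mathsf{C}(PT),w(PT))>\epsilon|PT|$.
   Context: A layered graph over alphabet $\Sigma$ of depth $n$ is a directed graph whose vertices are partitioned into layers $0,\dots,n$, with exactly one vertex (the root) in layer $0$, and each vertex in layer $i<n$ has exactly $|\Sigma|$ out-edges to layer $i+1$ labeled by the distinct elements of $\Sigma$ (endpoints need not be distinct). A string $p\in\Sigma_{in}^i$ determines a unique root path ending at vertex $v(p)$ in layer $i$. A $(G,\Sigma_{out})$-code $\mathsf{C}$ assigns an element of $\Sigma_{out}$ to each edge; $\mathsf{C}(p)$ is the label string along $p$. Suffix distance: $\Delta_{sfx}(x,y)=\max_{0\le i\le m-1}\frac{\Delta(x[i+1:m],y[i+1:m])}{m-i}$ for $x,y\in\Sigma^m$, $\Delta$ Hamming distance. $L_i(\mathsf{C},w,\epsilon)=\{v(p):p\in\Sigma_{in}^i,\ \Delta_{sfx}(\mathsf{C}(p),w[1:i])<1-\epsilon\}$, $L(\mathsf{C},w,\epsilon)=\bigcup_{i=1}^nL_i(\mathsf{C},w,\epsilon)$. For $S\subseteq L(\mathsf{C},w,\epsilon)$, a prefix tree of $S$ is a union of paths $p(v)$ ($v\in S$) from the root to $v$, each with $\Delta_{sfx}(\mathsf{C}(p(v)),w[1:|p(v)|])<1-\epsilon$, that forms a rooted tree;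 $\mathcal{PT}(\mathsf{C},w,\epsilon)$ is the set of all prefix trees of all subsets of $L(\mathsf{C},w,\epsilon)$. For a subgraph $H$ of depth at most $|w|$, $|H|$ is its number of edges, $w(H)$ labels every edge of $H$ at depth $i$ with $w[i]$, $\mathsf{C}(H)$ labels edges of $H$ by $\mathsf{C}$, and $agr(w(H),\mathsf{C}(H))$ is the number of edges of $H$ on which the two labels coincide. *)

From mathcomp Require Import all_boot all_order all_algebra.
Set Implicit Arguments. Unset Strict Implicit. Unset Printing Implicit Defensive.
Import Order.TTheory GRing.Theory Num.Theory.
Local Open Scope ring_scope.

(* A layered graph of depth n over the input alphabet Sin, on a finite vertex
   type V.  [lg_layer v] is the layer of v; [lg_next v a] is the endpoint of the
   out-edge of v labelled a (meaningful only when lg_layer v < n).  The edges of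
   the graph are the pairs (v, a) with lg_layer v < n, so that each vertex of a
   layer i < n has exactly |Sin| out-edges to layer i+1 with distinct labels
   (the endpoints need not be distinct). *)
Record layered_graph (Sin : finType) (V : finType) (n : nat) := LayeredGraph {
  lg_layer : V -> nat;
  lg_root : V;
  lg_next : V -> Sin -> V;
  lg_layer_le : forall v, (lg_layer v <= n)%N;
  lg_root_layer : lg_layer lg_root = 0%N;
  lg_root_unique : forall v, lg_layer v = 0%N -> v = lg_root;
  lg_next_layer : forall v a, (lg_layer v < n)%N ->
                   lg_layer (lg_next v a) = (lg_layer v).+1
}.

Section Defs.
Variables (Sin Sout : finType) (V : finType) (n : nat)
          (G : layered_graph Sin V n).

Definition code := V -> Sin -> Sout.

Definition is_edge (e : V * Sin) : bool := (lg_layer G e.1 < n)%N.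

Fixpoint path_edges (u : V) (p : seq Sin) : seq (V * Sin) :=
  match p with
  | [::] => [::]
  | a :: p' => (u, a) :: path_edges (lg_next G u a) p'
  end.

Definition vend (p : seq Sin) : V := foldl (lg_next G) (lg_root G) p.

Definition code_word (C : code) (p : seq Sin) : seq Sout :=
  [seq C e.1 e.2 | e <- path_edges (lg_root G) p].

Definition hamming (x y : seq Sout) : nat :=
  count (fun ab : Sout * Sout => ab.1 != ab.2) (zip x y).

Definition sfx_dist (R : realFieldType) (x y : seq Sout) : R :=
  \big[Num.max/0]_(i < size x)
     ((hamming (drop i x) (drop i y))%:R / (size x - i)%:R).

Definition in_L (R : realFieldType) (C : code) (w : n.-tuple Sout) (eps : R)
    (v : V) : Prop :=
  exists p : seq Sin, [/\ (1 <= size p <= n)%N, vend p = v &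
     sfx_dist R (code_word C p) (take (size p) w) < 1 - eps].

(* PT is a prefix tree of some subset S of L(C, w, eps): PT (given by its edge
   set) is the union of root paths p(v), v \in S, each ending at v and with
   suffix distance < 1 - eps, and this union is a rooted tree (every vertex has
   at most one incoming edge in PT; rootedness/acyclicity is automatic since
   PT is a union of root paths in a layered graph). *)
Definition prefix_tree_of (R : realFieldType) (C : code) (w : n.-tuple Sout)
    (eps : R) (S : {set V}) (PT : {set V * Sin}) : Prop :=
  (forall v, v \in S -> in_L C w eps v) /\
  exists pth : V -> seq Sin,
    [/\ forall v, v \in S ->
          [/\ (1 <= size (pth v) <= n)%N, vend (pth v) = v &
              sfx_dist R (code_word C (pth v)) (take (size (pth v)) w)
                < 1 - eps],
        PT = \bigcup_(v in S) [set e in path_edges (lg_root G) (pth v)] &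
        forall e1 e2, e1 \in PT -> e2 \in PT ->
          lg_next G e1.1 e1.2 = lg_next G e2.1 e2.2 -> e1 = e2].

(* PT \in PT(C, w, eps), restricted to prefix trees of nonempty subsets *)
Definition in_PT (R : realFieldType) (C : code) (w : n.-tuple Sout) (eps : R)
    (PT : {set V * Sin}) : Prop :=
  exists S : {set V}, S != set0 /\ prefix_tree_of C w eps S PT.

(* agr(w(H), C(H)) : number of edges of H at depth i (i.e. leaving layer i-1)
   whose C-label equals w[i] *)
Definition agr (C : code) (w : n.-tuple Sout) (H : {set V * Sin}) : nat :=
  #|[set e in H | onth w (lg_layer G e.1) == Some (C e.1 e.2)]|.

End Defs.

From mathcomp Require Import all_boot all_order all_algebra.
From mathcomp Require Import lra.
Import Order.TTheory GRing.Theory Num.Theory.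
Local Open Scope ring_scope.
Set Implicit Arguments. Unset Strict Implicit.

(* Give every edge e the weight [agrees e - eps] (its "surplus"); the claim is
   that PT has positive total weight.  Add the root paths p(v) of PT one at a
   time.  Since PT is a tree, whenever an edge of p(v) is already present so is
   its predecessor on p(v); hence the new edges form a suffix of p(v).  The
   suffix-distance bound on p(v) says exactly that every nonempty suffix of p(v)
   has more than eps times its length agreements, so each path adds a
   nonnegative weight, and the first one a positive weight. *)

Lemma drop_zip (S T : Type) (s : seq S) (t : seq T) j :
  drop j (zip s t) = zip (drop j s) (drop j t).
Proof. by elim: s t j => [|x s IHs] [|y t] [|j] //=; case: drop. Qed.

Lemma sumr_count_sub (R : pzRingType) (T : Type) (a : pred T) (c : R) (s : seq T) :
  \sum_(x <- s) ((a x)%:R - c) = (count a s)%:R - c * (size s)%:R.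
Proof.
elim: s => [|x s IHs]; first by rewrite big_nil mulr0 subr0.
by rewrite big_cons IHs /= natrD mulrSr mulrDr mulr1 opprD addrACA (addrC (- c)).
Qed.

Lemma sfx_dist_ge_drop (R : realFieldType) (Sout : finType) (x y : seq Sout) i :
  (i < size x)%N ->
  (hamming (drop i x) (drop i y))%:R / (size x - i)%:R <= sfx_dist R x y.
Proof.
move=> lt_i.
exact: (le_bigmax 0 (fun i : 'I_(size x) =>
  (hamming (drop i x) (drop i y))%:R / (size x - i)%:R) (Ordinal lt_i)).
Qed.

Lemma setD_prefix_closed_drop (T : finType) (A : {set T}) (x0 : T) (s : seq T) :
    (forall k, (k.+1 < size s)%N -> nth x0 s k.+1 \in A -> nth x0 s k \in A) ->
  exists j, [set x in s] :\: A = [set x in drop j s].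
Proof.
elim: s => [|x s IHs] closedA.
  by exists 0%N; apply/setP => y; rewrite !inE andbF.
have [xA|xNA] := boolP (x \in A).
  have [|j Ej] := IHs; first exact: (fun k => closedA k.+1).
  exists j.+1; rewrite -Ej.
  by apply/setP => y; rewrite !inE; case: eqP => // ->; rewrite xA.
exists 0%N; rewrite drop0; apply/setP => y; rewrite in_setD in_set andb_idl //.
move=> /(nthP x0)[k lt_k <-]; apply: contra xNA.
by elim: k lt_k => // k IHk lt_k /(closedA k lt_k); apply/IHk/ltnW.
Qed.

Section LayeredPaths.
Variables (Sin V : finType) (n : nat) (G : layered_graph Sin V n).
Local Notation layer := (lg_layer G).
Local Notation next := (lg_next G).
Local Notation root := (lg_root G).
Local Notation root_edges := (path_edges G root).

Lemma size_path_edges u p : size (path_edges G u p) = size p.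
Proof. by elim: p u => //= a p IHp u; rewrite IHp. Qed.

Lemma map_layer_path_edges u p : (layer u + size p <= n)%N ->
  [seq layer e.1 | e <- path_edges G u p] = iota (layer u) (size p).
Proof.
elim: p u => //= a p IHp u; rewrite addnS => lt_n.
have lt_u : (layer u < n)%N by apply: leq_ltn_trans lt_n; apply: leq_addr.
by rewrite IHp lg_next_layer // addSnnS.
Qed.

Lemma uniq_path_edges u p : (layer u + size p <= n)%N -> uniq (path_edges G u p).
Proof.
move=> le_n; apply: (map_uniq (f := fun e => layer e.1)).
by rewrite map_layer_path_edges ?iota_uniq.
Qed.

Lemma layer_nth_path_edges u p e0 k : (layer u + size p <= n)%N -> (k < size p)%N ->
  layer (nth e0 (path_edges G u p) k).1 = (layer u + k)%N.
Proof.
move=> le_n lt_k; have /(congr1 (nth 0%N ^~ k)) := map_layer_path_edges le_n.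
by rewrite (nth_map e0) ?size_path_edges // nth_iota.
Qed.

Lemma next_nth_path_edges u p e0 k : (k.+1 < size p)%N ->
  next (nth e0 (path_edges G u p) k).1 (nth e0 (path_edges G u p) k).2
  = (nth e0 (path_edges G u p) k.+1).1.
Proof. by elim: p u k => [|a [|b p] IHp] u [|k] //= lt_k; rewrite IHp. Qed.

Lemma mem_root_path_edges p e0 e : (size p <= n)%N -> e \in root_edges p ->
  (layer e.1 < size p)%N /\ nth e0 (root_edges p) (layer e.1) = e.
Proof.
move=> le_n /(nthP e0)[k]; rewrite size_path_edges => lt_k <-.
by rewrite layer_nth_path_edges ?lg_root_layer.
Qed.

Lemma tree_pred_edge_mem (H : {set V * Sin}) p q e0 k :
    {in H &, injective (fun e => next e.1 e.2)} ->
    {subset root_edges p <= H} -> {subset root_edges q <= H} ->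
    (size p <= n)%N -> (size q <= n)%N -> (k.+1 < size p)%N ->
  nth e0 (root_edges p) k.+1 \in root_edges q -> nth e0 (root_edges p) k \in root_edges q.
Proof.
move=> injH sub_p sub_q le_p le_q lt_k in_q.
have [] := mem_root_path_edges e0 le_q in_q.
rewrite layer_nth_path_edges ?lg_root_layer // => lt_kq Eq.
have lt_k' : (k < size p)%N by apply: ltnW.
have lt_kq' : (k < size q)%N by apply: ltnW.
have -> : nth e0 (root_edges p) k = nth e0 (root_edges q) k.
  apply: injH; rewrite /= ?next_nth_path_edges ?Eq //.
    by apply/sub_p/mem_nth; rewrite size_path_edges.
  by apply/sub_q/mem_nth; rewrite size_path_edges.
by rewrite mem_nth ?size_path_edges.
Qed.

End LayeredPaths.

Section Agreement.
Variables (R : realFieldType) (Sin Sout V : finType) (n : nat).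
Variables (G : layered_graph Sin V n) (C : code Sin Sout V) (w : n.-tuple Sout).
Variable eps : R.
Local Notation layer := (lg_layer G).
Local Notation root_edges := (path_edges G (lg_root G)).

Definition agrees (e : V * Sin) : bool := onth w (layer e.1) == Some (C e.1 e.2).

Lemma map_agrees_root_path_edges p : (size p <= n)%N ->
  [seq agrees e | e <- root_edges p] =
  [seq ab.1 == ab.2 | ab <- zip (code_word G C p) (take (size p) w)].
Proof.
move=> le_n; have size_w : size w = n by rewrite size_tuple.
have size_tw : size (take (size p) w) = size p by rewrite size_takel ?size_w.
have size_zip_p : size (zip (code_word G C p) (take (size p) w)) = size p.
  by rewrite size_zip size_map size_path_edges size_tw minnn.
apply: (@eq_from_nth _ false) => [|k]; rewrite size_map size_path_edges.
  by rewrite size_map size_zip_p.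
move=> lt_k; have lt_kn : (k < n)%N := leq_trans lt_k le_n.
have a : Sin by case: p lt_k {le_n size_tw size_zip_p}.
pose e0 := (lg_root G, a); pose c0 := C e0.1 e0.2.
rewrite (nth_map e0) ?size_path_edges // (nth_map (c0, c0)) ?size_zip_p //.
rewrite nth_zip /=; last by rewrite size_map size_path_edges.
rewrite (nth_map e0) ?size_path_edges // nth_take // /agrees.
rewrite layer_nth_path_edges ?lg_root_layer // add0n onthE (nth_map c0) ?size_w //.
by rewrite eq_sym.
Qed.

Lemma count_agrees_add_hamming p j : (size p <= n)%N ->
  (count agrees (drop j (root_edges p))
   + hamming (drop j (code_word G C p)) (drop j (take (size p) w)))%N = (size p - j)%N.
Proof.
move=> le_n; rewrite /hamming -drop_zip.
have -> : count agrees (drop j (root_edges p)) =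
           count idfun (drop j (map agrees (root_edges p))).
  by rewrite -map_drop count_map.
rewrite map_agrees_root_path_edges // -map_drop count_map.
rewrite (count_predC (fun ab : Sout * Sout => ab.1 == ab.2)) size_drop.
by rewrite size_zip size_map size_path_edges size_takel ?minnn // size_tuple.
Qed.

Lemma count_agrees_drop_gt p j : (size p <= n)%N -> (j < size p)%N ->
    sfx_dist R (code_word G C p) (take (size p) w) < 1 - eps ->
  eps * (size p - j)%:R < (count agrees (drop j (root_edges p)))%:R.
Proof.
move=> le_n lt_j sfx_lt.
have size_cw : size (code_word G C p) = size p by rewrite size_map size_path_edges.
have := @sfx_dist_ge_drop R Sout (code_word G C p) (take (size p) w) j.
rewrite size_cw => /(_ lt_j) /le_lt_trans /(_ sfx_lt).
have m_gt0 : (0 : R) < (size p - j)%:R by rewrite ltr0n subn_gt0.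
rewrite ltr_pdivrMr // -(count_agrees_add_hamming j le_n) natrD.
lra.
Qed.

Definition surplus (H : {set V * Sin}) : R := \sum_(e in H) ((agrees e)%:R - eps).

Lemma surplusE H : surplus H = (agr G C w H)%:R - eps * #|H|%:R.
Proof.
have -> : agr G C w H = (\sum_(e in H) agrees e)%N.
  rewrite /agr -sum1_card (eq_bigl (fun e => (e \in H) && agrees e)) => [|e].
    by rewrite big_mkcondr; apply: eq_bigr => e _; case: agrees.
  by rewrite inE.
by rewrite /surplus sumrB sumr_const natr_sum mulr_natr.
Qed.

Lemma surplus_setU A B : surplus (A :|: B) = surplus B + surplus (A :\: B).
Proof.
by rewrite /surplus (big_setID B) setDUl setDv setU0 (setIidPr (subsetUr _ _)).
Qed.

Lemma surplus_drop_root_path_edges p j : (size p <= n)%N ->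
  surplus [set e in drop j (root_edges p)] =
  (count agrees (drop j (root_edges p)))%:R - eps * (size p - j)%:R.
Proof.
move=> le_n; rewrite /surplus (eq_bigl (mem (drop j (root_edges p)))) => [|e].
  rewrite -big_uniq ?drop_uniq ?uniq_path_edges ?lg_root_layer //.
  by rewrite sumr_count_sub size_drop size_path_edges.
by rewrite inE.
Qed.

Lemma surplus_root_path_edges_gt0 p : (0 < size p <= n)%N ->
    sfx_dist R (code_word G C p) (take (size p) w) < 1 - eps ->
  0 < surplus [set e in root_edges p].
Proof.
case/andP=> p_gt0 le_n sfx_lt.
rewrite -[root_edges p]drop0 surplus_drop_root_path_edges // subr_gt0.
by rewrite count_agrees_drop_gt.
Qed.

Lemma surplus_root_path_edges_setD_ge0 p (A : {set V * Sin}) e0 : (size p <= n)%N ->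
    sfx_dist R (code_word G C p) (take (size p) w) < 1 - eps ->
    (forall k, (k.+1 < size p)%N ->
       nth e0 (root_edges p) k.+1 \in A -> nth e0 (root_edges p) k \in A) ->
  0 <= surplus ([set e in root_edges p] :\: A).
Proof.
move=> le_n sfx_lt closedA.
have [|j ->] := @setD_prefix_closed_drop _ A e0 (root_edges p).
  by move=> k; rewrite size_path_edges; apply: closedA.
rewrite surplus_drop_root_path_edges //; have [lt_j|le_j] := ltnP j (size p).
  by rewrite subr_ge0 ltW ?count_agrees_drop_gt.
have /eqP-> : (size p - j == 0)%N by rewrite subn_eq0.
by rewrite drop_oversize ?size_path_edges // mulr0 subr0.
Qed.

End Agreement.

Section PrefixTree.
Variables (R : realFieldType) (Sin Sout V : finType) (n : nat).
Variables (G : layered_graph Sin V n) (C : code Sin Sout V) (w : n.-tuple Sout).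
Variables (eps : R) (pth : V -> seq Sin) (S : {set V}).
Local Notation root_edges := (path_edges G (lg_root G)).
Local Notation edges v := [set e in root_edges (pth v)].

Hypothesis pth_good : forall v, v \in S -> (0 < size (pth v) <= n)%N /\
  sfx_dist R (code_word G C (pth v)) (take (size (pth v)) w) < 1 - eps.
Hypothesis in_tree_inj :
  {in \bigcup_(v in S) edges v &, injective (fun e => lg_next G e.1 e.2)}.

Lemma surplus_bigcup_gt0 (s : seq V) : s != [::] -> {subset s <= S} ->
  0 < surplus G C w eps (\bigcup_(v <- s) edges v).
Proof.
elim: s => [//|v s IHs] _ sub_s; rewrite big_cons.
have Sv : v \in S by apply/sub_s/mem_head.
have [/andP[pv_gt0 le_pv] sfx_pv] := pth_good Sv.
have [-> | s_neq0] := eqVneq s [::].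
  by rewrite big_nil setU0 surplus_root_path_edges_gt0 ?pv_gt0.
set U := \bigcup_(u <- s) edges u.
rewrite surplus_setU; apply: ltr_wpDr; last first.
  by apply: IHs => // u su; apply/sub_s/mem_behead.
have e0 : V * Sin by case: (pth v) pv_gt0 => // a _; exact: (lg_root G, a).
apply: (surplus_root_path_edges_setD_ge0 (e0 := e0)) => // k lt_k.
rewrite /U bigcup_seq => /bigcupP[u su in_u]; apply/bigcupP; exists u => //.
have Su : u \in S by apply/sub_s/mem_behead.
have sub_edges x : x \in S -> {subset root_edges (pth x) <= \bigcup_(v in S) edges v}.
  by move=> Sx e pe; apply/bigcupP; exists x; rewrite ?inE.
rewrite !inE in in_u *; apply: (tree_pred_edge_mem in_tree_inj) => //.
- exact: sub_edges.
- exact: sub_edges.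
- by case/andP: (pth_good Su).1.
Qed.

End PrefixTree.

Theorem lemma5p5 (R : realFieldType) (Sin Sout V : finType) (n : nat)
    (G : layered_graph Sin V n) (C : code Sin Sout V) (w : n.-tuple Sout)
    (eps : R) (PT : {set V * Sin}) :
  0 < eps -> in_PT G C w eps PT ->
  eps * (#|PT|)%:R < (agr G C w PT)%:R.
Proof.
move=> _ [S [S_neq0 [_ [pth [pth_good -> in_tree_inj]]]]].
have enumS_neq0 : enum S != [::] by rewrite -size_eq0 -cardE -lt0n card_gt0.
have enumS_sub : {subset enum S <= S} by move=> v; rewrite mem_enum.
rewrite -subr_gt0 -surplusE -big_enum.
by apply: (surplus_bigcup_gt0 _ in_tree_inj) => // v /pth_good[].
Qed.
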